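(* Let $F$ be any non-trivial finite group with trivial center (e.g. a non-abelian finite simple group). Then there exist an infinite compact Hausdorff space $X$ and two minimal free continuous actions $\widetilde{\alpha}$ and $\widetilde{\alpha}'$ of $\mathbb{Z}\times F$ on $X$ such that $\widetilde{\alpha}$ and $\widetilde{\alpha}'$ are continuously orbit equivalent but not conjugate.
   Context: Continuous orbit equivalence: two continuous actions $G\curvearrowright X$ and $K\curvearrowright Y$ on compact Hausdorff spaces are continuously orbit equivalent if there is a homeomorphism $\phi:X\to Y$ with inverse $\psi$ and continuous maps $a:G\times X\to K$, $b:K\times Y\to G$ such that $\phi(gx)=a(g,x)\phi(x)$ and $\psi(hy)=b(h,y)\psi(y)$ for all $g\in G$, $h\in K$, $x\in X$, $y\in Y$. Two actions $\alpha,\beta$ of the same group $G$ on $X$ are conjugate if there are a homeomorphism $\phi:X\to X$ and a group automorphism $\tau$ of $G$ with $\phi(\alpha_g x)=\beta_{\tau(g)}(\phi(x))$ for all $g\in G$, $x\in X$ (equivalently, the maps $a,b$ above can be taken to be group isomorphisms). *)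

From HB Require Import structures.
From mathcomp Require Import all_boot all_order all_algebra all_fingroup all_solvable.
From mathcomp Require Import all_classical all_reals all_analysis.
Set Implicit Arguments. Unset Strict Implicit. Unset Printing Implicit Defensive.
Import Order.TTheory GRing.Theory Num.Theory.

Definition ZF (gT : finGroupType) := (int * gT)%type.

Definition zf_one (gT : finGroupType) : ZF gT := (0%R, 1%g).
Definition zf_mul (gT : finGroupType) (a b : ZF gT) : ZF gT :=
  ((a.1 + b.1)%R, (a.2 * b.2)%g).

Local Open Scope classical_set_scope.

(* Group action of Z x F on X by continuous maps (Z x F is discrete, so
   continuity of the action is continuity of each map alpha g). *)
Definition cont_action (gT : finGroupType) (X : topologicalType)
  (alpha : ZF gT -> X -> X) : Prop :=
  [/\ forall x, alpha (zf_one gT) x = x,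
      forall g h x, alpha (zf_mul g h) x = alpha g (alpha h x)
    & forall g, continuous (alpha g)].

Definition orbit (gT : finGroupType) (X : Type) (alpha : ZF gT -> X -> X) (x : X)
  : set X := [set alpha g x | g in [set: ZF gT]].

Definition minimal_action (gT : finGroupType) (X : topologicalType)
  (alpha : ZF gT -> X -> X) : Prop :=
  forall x, closure (orbit alpha x) = [set: X].

Definition free_action (gT : finGroupType) (X : Type)
  (alpha : ZF gT -> X -> X) : Prop :=
  forall g x, alpha g x = x -> g = zf_one gT.

(* A map X -> D into a discrete space D is continuous iff it is locally constant. *)
Definition loc_const (X : topologicalType) (D : Type) (f : X -> D) : Prop :=
  forall x, \forall y \near x, f y = f x.

(* continuous map G x X -> G, G discrete *)
Definition cocycle_cont (gT : finGroupType) (X : topologicalType)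
  (a : ZF gT -> X -> ZF gT) : Prop := forall g, loc_const (a g).

Definition cont_orbit_equiv (gT : finGroupType) (X : topologicalType)
  (alpha beta : ZF gT -> X -> X) : Prop :=
  exists (phi psi : X -> X) (a b : ZF gT -> X -> ZF gT),
    [/\ continuous phi, continuous psi, cancel phi psi & cancel psi phi] /\
    [/\ cocycle_cont a, cocycle_cont b,
        forall g x, phi (alpha g x) = beta (a g x) (phi x)
      & forall h y, psi (beta h y) = alpha (b h y) (psi y)].

Definition zf_aut (gT : finGroupType) (tau : ZF gT -> ZF gT) : Prop :=
  bijective tau /\ forall g h, tau (zf_mul g h) = zf_mul (tau g) (tau h).

Definition conjugate_actions (gT : finGroupType) (X : topologicalType)
  (alpha beta : ZF gT -> X -> X) : Prop :=
  exists (phi psi : X -> X) (tau : ZF gT -> ZF gT),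
    [/\ continuous phi, continuous psi, cancel phi psi & cancel psi phi] /\
    [/\ zf_aut tau
      & forall g x, phi (alpha g x) = beta (tau g) (phi x)].

(* Take for X the
   product Z_2 x F of the 2-adic integers (the Cantor space, a point being its
   sequence of binary digits) with the discrete group F.  For c in F, the group
   Z x F acts on X by the "twisted" action
       (n, f) . (y, k) = (y + n, f k c^n).
   Each twisted action is continuous, free (Z acts freely on Z_2) and minimal
   (Z is dense in Z_2, F is transitive on itself); any two twisted actions have
   the same orbits, and the identity of X is a continuous orbit equivalence
   whose cocycles only depend on the F-coordinate.  On the other hand, when F
   has trivial center every automorphism of Z x F maps (1, 1) to (+-1, 1); as
   translation by 2^j tends to the identity of Z_2, a conjugacy between the
   actions twisted by 1 and by c would force c^(2^j) = 1, i.e. c would be a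
   2-element.  Such a c exists since F is not a 2-group (2-groups are
   nilpotent, so have nontrivial center). *)

From HB Require Import structures.
From mathcomp Require Import all_boot all_order all_algebra all_fingroup all_solvable.
From mathcomp Require Import all_classical all_reals all_analysis.
Set Implicit Arguments. Unset Strict Implicit. Unset Printing Implicit Defensive.
Import Order.TTheory GRing.Theory Num.Theory.
Local Open Scope classical_set_scope.
Local Open Scope ring_scope.

Definition pow2 (j : nat) : int := 2 ^+ j.

Lemma pow2_gt0 j : 0 < pow2 j. Proof. by rewrite exprn_gt0. Qed.
Lemma pow2S j : pow2 j.+1 = pow2 j * 2. Proof. by rewrite /pow2 exprSr. Qed.
Lemma pow2D i k : pow2 (i + k) = pow2 k * pow2 i.
Proof. by rewrite /pow2 exprD mulrC. Qed.
Lemma pow2E j : pow2 j = (2 ^ j)%N%:Z. Proof. by rewrite /pow2 -natz natrX. Qed.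

(* A point [y] of the Cantor space is read as the 2-adic integer with binary
   digits [y 0], [y 1], ...; [digits j y] is the integer written with its
   first [j] digits, i.e. the residue of [y] modulo [2^j]. *)
Definition digits (j : nat) (y : cantor_space) : int :=
  \sum_(i < j) (y i : nat)%:Z * pow2 i.

Lemma digits0 y : digits 0 y = 0. Proof. by rewrite /digits big_ord0. Qed.

Lemma digitsS j y : digits j.+1 y = digits j y + (y j : nat)%:Z * pow2 j.
Proof. by rewrite /digits big_ord_recr. Qed.

Lemma digits_bound j y : 0 <= digits j y < pow2 j.
Proof.
elim: j => [|j /andP[ge0 lt2j]]; first by rewrite digits0 /pow2 expr0.
rewrite digitsS pow2S; case: (y j) => /=.
  by rewrite mul1r addr_ge0 ?(ltW (pow2_gt0 j)) //= mulr2n mulrDr mulr1 ltrD2r.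
rewrite mul0r addr0 ge0 /=; apply: (lt_le_trans lt2j).
by rewrite ler_peMr ?(ltW (pow2_gt0 j)) // ler1n.
Qed.

Lemma digit_digits i y : y i = (pow2 i <= digits i.+1 y).
Proof.
rewrite digitsS; have /andP[ge0 lt2i] := digits_bound i y; case: (y i) => /=.
  by rewrite mul1r lerDr.
by rewrite mul0r addr0 leNgt lt2i.
Qed.

Lemma digits_mod i k y : digits i y = (digits (i + k) y %% pow2 i)%Z.
Proof.
elim: k => [|k IH]; first by rewrite addn0 modz_small // digits_bound.
by rewrite addnS digitsS IH pow2D mulrA addrC modzMDl.
Qed.

Lemma digits_le i j y z : (i <= j)%N -> digits j y = digits j z ->
  digits i y = digits i z.
Proof.
move=> le_ij eq_j.
by rewrite (digits_mod _ (j - i) y) (digits_mod _ (j - i) z) subnKC // eq_j.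
Qed.

Lemma digits_agree j y z : (forall i, (i < j)%N -> y i = z i) ->
  digits j y = digits j z.
Proof. by move=> yz; apply: eq_bigr => i _; rewrite yz. Qed.

Lemma agree_digits j y z : digits j y = digits j z ->
  forall i, (i < j)%N -> y i = z i.
Proof. by move=> eq_j i lt_ij; rewrite !digit_digits (digits_le lt_ij eq_j). Qed.

Lemma digits_inj y z : (forall j, digits j y = digits j z) -> y = z.
Proof. by move=> eq_y; apply: funext => i; rewrite !digit_digits eq_y. Qed.

Definition cyl (j : nat) (y : cantor_space) : set cantor_space :=
  [set z | digits j z = digits j y].

Lemma cyl_nbhs j y : nbhs y (cyl j y).
Proof.
suff : nbhs y [set z : cantor_space | forall i, (i < j)%N -> z i = y i].
  by apply: filterS => z; apply: digits_agree.
elim: j => [|j IH]; first exact: filterS filterT.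
have digit_j : nbhs y [set z : cantor_space | z j = y j].
  by apply: (@proj_continuous nat (fun _ => bool) j y [set y j]); apply: discrete_set1.
apply: filterS (filterI IH digit_j) => z [agree_j zj] i; rewrite ltnS leq_eqVlt.
by case/orP => [/eqP -> //|]; apply: agree_j.
Qed.

Lemma nbhs_cyl y N : nbhs y N -> exists j, cyl j y `<=` N.
Proof.
pose G := filter_from [set: nat] (fun j => cyl j y).
have FG : Filter G.
  apply: filter_from_filter; first by exists 0%N.
  move=> i j _ _; exists (maxn i j) => // z yz.
  by split; apply: digits_le yz; rewrite ?leq_maxl ?leq_maxr.
have : G --> (y : {ptws nat -> bool}).
  apply/pointwise_cvgP => t; apply/discrete_cvg.
  by exists t.+1 => // z /agree_digits; apply.
by move=> /(_ N) cvgN /cvgN [j _ sub_j]; exists j.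
Qed.

Lemma mod_split (r a : int) : 0 < a -> 0 <= r < a * 2 ->
  r = (r %% a)%Z + ((a <= r)%R : nat)%:Z * a.
Proof.
move=> a_gt0 /andP[r_ge0 r_lt]; case: leP => /= le_ar.
  have -> : (r %% a)%Z = ((r - a) %% a)%Z by rewrite -(modzDr (r - a) a) subrK.
  rewrite mul1r modz_small ?subrK //.
  by rewrite subr_ge0 le_ar /= ltrBlDr -[a in a + a]mulr1 -mulrDr.
by rewrite mul0r addr0 modz_small // r_ge0.
Qed.

Lemma modz_mulmod (m d k : int) : ((m %% (k * d))%Z %% d)%Z = (m %% d)%Z.
Proof. by rewrite {2}(divz_eq m (k * d)) mulrA modzMDl. Qed.

(* The odometer: translation of 2-adic integers by an integer [n]. *)
Definition oadd (n : int) (y : cantor_space) : cantor_space :=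
  fun i => pow2 i <= ((digits i.+1 y + n) %% pow2 i.+1)%Z.

Lemma digits_oadd j n y : digits j (oadd n y) = ((digits j y + n) %% pow2 j)%Z.
Proof.
elim: j => [|j IH]; first by rewrite digits0 /pow2 expr0 modz1.
rewrite digitsS IH; set r := ((digits j.+1 y + n) %% pow2 j.+1)%Z.
have -> : ((digits j y + n) %% pow2 j)%Z = (r %% pow2 j)%Z.
  rewrite /r pow2S mulrC modz_mulmod.
  by rewrite digitsS -addrA [_ * pow2 j + n]addrC addrA addrC modzMDl.
rewrite /oadd -/r [in RHS](@mod_split r (pow2 j)) ?pow2_gt0 //.
by rewrite /r modz_ge0 ?gt_eqF ?pow2_gt0 //= -pow2S ltz_pmod // pow2_gt0.
Qed.

Lemma oadd0 y : oadd 0 y = y.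
Proof.
by apply: digits_inj => j; rewrite digits_oadd addr0 modz_small // digits_bound.
Qed.

Lemma oaddA m n y : oadd m (oadd n y) = oadd (m + n) y.
Proof.
by apply: digits_inj => j; rewrite !digits_oadd modzDml -addrA [n + m]addrC.
Qed.

Lemma oadd_cont n : continuous (oadd n).
Proof.
move=> y; apply/pointwise_cvgP => t; apply/discrete_cvg.
by apply: filterS (cyl_nbhs t.+1 y) => z yz; rewrite /oadd /= yz.
Qed.

(* [Z] acts freely on the 2-adic integers: [n] would be divisible by all [2^j]. *)
Lemma oadd_free n y : oadd n y = y -> n = 0.
Proof.
move=> fix_y; have dvd_n j : (pow2 j %| n)%Z.
  have : (digits j y + n == digits j y + 0 %[mod pow2 j])%Z.
    by rewrite -digits_oadd fix_y addr0 modz_small ?digits_bound.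
  by rewrite eqz_modDl mod0z => /eqP /dvdz_mod0P.
apply/eqP; apply: contraT => n_neq0.
have := dvd_n `|n|%N; rewrite dvdzE /pow2 abszX /= => /dvdn_leq.
by rewrite absz_gt0 n_neq0 => /(_ isT); rewrite leqNgt ltn_expl.
Qed.

Lemma oadd_inj y : injective (oadd^~ y).
Proof.
move=> m n /(congr1 (oadd (- n))); rewrite !oaddA addNr oadd0 => /oadd_free.
by move/eqP; rewrite addrC subr_eq0 => /eqP.
Qed.

(* Density of [Z]: every cylinder is reached by an integer translation. *)
Lemma oadd_cyl j y z : cyl j z (oadd (digits j z - digits j y) y).
Proof. by rewrite /cyl /= digits_oadd addrC subrK modz_small // digits_bound. Qed.

Lemma oadd_pow2 j y : cyl j y (oadd (pow2 j) y).
Proof. by rewrite /cyl /= digits_oadd modzDr modz_small // digits_bound. Qed.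

Section PowerMap.
Variable gT : finGroupType.
Implicit Types c : gT.

Definition cpow c (n : int) : gT := (c ^+ absz (n %% (#[c]%g)%:Z)%Z)%g.

Lemma modz_order c (n : int) : (absz (n %% (#[c]%g)%:Z)%Z)%:Z = (n %% (#[c]%g)%:Z)%Z.
Proof. by rewrite gez0_abs // modz_ge0 // lt0n_neq0 // order_gt0. Qed.

Lemma cpowD c m n : cpow c (m + n) = (cpow c m * cpow c n)%g.
Proof.
rewrite /cpow -expgD -[RHS]expg_mod_order; congr (_ ^+ _)%g.
by apply/eqP; rewrite -eqz_nat -modz_nat PoszD !modz_order modzDm.
Qed.

Lemma cpow0 c : cpow c 0 = 1%g. Proof. by rewrite /cpow mod0z. Qed.

Lemma cpow1n n : cpow 1%g n = 1%g. Proof. by rewrite /cpow expg1n. Qed.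

Lemma cpow_eq1 c n : (cpow c n == 1)%g = ((#[c]%g)%:Z %| n)%Z.
Proof.
rewrite /cpow -order_dvdn -[X in (X %| _)%N]absz_nat -[X in (_ %| X)%N]absz_nat.
by rewrite -dvdzE modz_order !(sameP dvdz_mod0P eqP) modz_mod.
Qed.
End PowerMap.

Definition zgen (gT : finGroupType) : ZF gT := (1, 1%g).

Lemma additive_int (f : int -> int) : {morph f : m n / m + n} ->
  forall n, f n = n * f 1.
Proof.
move=> fD; have f0 : f 0 = 0 by apply: (addrI (f 0)); rewrite -fD !addr0.
have fnat k : f k%:Z = k%:Z * f 1.
  elim: k => [|k IH]; first by rewrite mul0r.
  by rewrite intS fD IH mulrDl mul1r addrC.
case=> k; first exact: fnat.
by apply/eqP; rewrite NegzE mulNr -addr_eq0 -fnat -fD addNr f0.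
Qed.

Section ZFAutomorphism.
Variables (gT : finGroupType) (tau : ZF gT -> ZF gT).
Hypothesis tau_aut : zf_aut tau.

Lemma zf_autM g h : tau (zf_mul g h) = zf_mul (tau g) (tau h).
Proof. exact: tau_aut.2. Qed.

Lemma zf_aut1 : tau (zf_one gT) = zf_one gT.
Proof.
have := zf_autM (zf_one gT) (zf_one gT).
rewrite {1}/zf_mul /zf_one /= addr0 mulg1.
case: (tau _) => t1 t2 [e1 e2].
have -> : t1 = 0 by apply: (addrI t1); rewrite -e1 addr0.
by have -> : t2 = 1%g by apply: (mulgI t2); rewrite -e2 mulg1.
Qed.

Lemma zf_aut_surj z : exists w, tau w = z.
Proof. by case: tau_aut => -[tau' _ tauK] _; exists (tau' z); rewrite tauK. Qed.

Lemma zf_aut_torsion f : (tau (0, f)).1 = 0.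
Proof.
have tauX k : (tau (0, f ^+ k)%g).1 = (tau (0, f)).1 *+ k.
  elim: k => [|k IH]; first exact: (congr1 fst zf_aut1).
  have -> : (0, (f ^+ k.+1)%g) = zf_mul (0, f) (0, (f ^+ k)%g).
    by rewrite /zf_mul addr0 expgS.
  by rewrite zf_autM /= IH mulrS.
have := tauX #[f]%g; rewrite expg_order (congr1 fst zf_aut1) => /esym/eqP.
by rewrite mulrn_eq0 (gtn_eqF (order_gt0 f)) => /eqP.
Qed.

Lemma zf_aut_fst g : (tau g).1 = g.1 * (tau (zgen gT)).1.
Proof.
have -> : g = zf_mul (g.1, 1%g) (0, g.2) by rewrite /zf_mul /= addr0 mul1g; case: g.
rewrite zf_autM /= zf_aut_torsion addr0.
have tauD : {morph (fun m => (tau (m, 1%g)).1) : m n / m + n}.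
  move=> m n /=; have -> : (m + n, 1%g) = zf_mul (m, 1%g) (n, 1%g) :> ZF gT.
    by rewrite /zf_mul /= mulg1.
  by rewrite zf_autM.
by rewrite addr0; exact: (additive_int tauD g.1).
Qed.

(* Since [tau] is onto, [(tau (1, 1)).1] is a unit of [Z], i.e. [+1] or [-1]. *)
Lemma zf_aut_unit : absz (tau (zgen gT)).1 = 1%N.
Proof.
have [w /(congr1 fst)] := zf_aut_surj (zgen gT).
rewrite zf_aut_fst => /(congr1 absz); rewrite abszM /= => /eqP.
by rewrite muln_eq1 => /andP[_ /eqP].
Qed.

Lemma zf_aut_central m : (tau (m, 1%g)).2 \in 'Z([set: gT]%SET)%g.
Proof.
apply/centerP; split; first by rewrite inE.
move=> h _; have [w tau_w] := zf_aut_surj (0, h).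
have -> : h = (tau w).2 by rewrite tau_w.
have mw : zf_mul (m, 1%g) w = zf_mul w (m, 1%g).
  by rewrite /zf_mul addrC mul1g mulg1.
by have := congr1 snd (congr1 tau mw); rewrite !zf_autM.
Qed.

Lemma zf_aut_Z : ('Z([set: gT]%SET) = 1)%g ->
  exists2 e : int, absz e = 1%N & forall m, tau (m, 1%g) = (m * e, 1%g).
Proof.
move=> Z1; exists (tau (zgen gT)).1; first exact: zf_aut_unit.
move=> m; have := zf_aut_central m; rewrite Z1 inE => /eqP tau2.
by rewrite [LHS]surjective_pairing tau2 (zf_aut_fst (m, 1%g)).
Qed.
End ZFAutomorphism.

Section TwistedActions.
Variable gT : finGroupType.

Definition Z2xF : topologicalType := (cantor_space * discrete_topology gT)%type.

Lemma nbhs_setX (x : Z2xF) (A : set cantor_space) (B : set (discrete_topology gT)) :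
  nbhs x.1 A -> nbhs x.2 B -> nbhs x (A `*` B).
Proof. by move=> nbhsA nbhsB; exists (A, B). Qed.

Lemma nbhs_setXP (x : Z2xF) (N : set Z2xF) : nbhs x N ->
  exists A B, [/\ nbhs x.1 A, nbhs x.2 B & A `*` B `<=` N].
Proof. by case=> -[A B] /= [nbhsA nbhsB] sub_N; exists A, B. Qed.

Lemma nbhs_snd (x : Z2xF) : nbhs x [set z : Z2xF | z.2 = x.2].
Proof. by apply: filterS (nbhs_setX filterT (discrete_set1 x.2)) => z []. Qed.

Lemma Z2xF_compact : compact [set: Z2xF].
Proof.
rewrite -setXTT; apply: compact_setX; first exact: cantor_space_compact.
exact/finite_compact/(@finite_finset gT).
Qed.

Lemma Z2xF_hausdorff : hausdorff_space Z2xF.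
Proof.
move=> p q pq.
have eq1 : p.1 = q.1.
  apply: cantor_space_hausdorff => A B nbhsA nbhsB.
  have [z [[Az _] [Bz _]]] := pq _ _ (nbhs_setX nbhsA filterT) (nbhs_setX nbhsB filterT).
  by exists z.1.
have eq2 : p.2 = q.2.
  apply: (@discrete_hausdorff (discrete_topology gT)) => A B nbhsA nbhsB.
  have [z [[_ Az] [_ Bz]]] := pq _ _ (nbhs_setX filterT nbhsA) (nbhs_setX filterT nbhsB).
  by exists z.2.
by case: p q eq1 eq2 {pq} => ? ? [? ?] /= -> ->.
Qed.

Lemma Z2xF_infinite : infinite_set [set: Z2xF].
Proof.
pose y0 : cantor_space := fun _ => false.
pose f (n : nat) : Z2xF := (oadd n%:Z y0, 1%g).
have f_inj : injective f by move=> m n [/oadd_inj []].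
move=> finX; apply: infinite_nat.
have := @finite_preimage _ _ [set: Z2xF] f (fun m n _ _ => @f_inj m n) finX.
by rewrite preimage_setT.
Qed.

Definition twisted (c : gT) (g : ZF gT) (x : Z2xF) : Z2xF :=
  (oadd g.1 x.1, (g.2 * (x.2 : gT) * cpow c g.1)%g).

Lemma twisted_action c : cont_action (twisted c).
Proof.
split.
- by case=> y k; rewrite /twisted /zf_one /= oadd0 cpow0 mul1g mulg1.
- case=> m f [n h] [y k]; rewrite /twisted /zf_mul /= oaddA.
  by rewrite addrC cpowD !mulgA.
- move=> g x N /nbhs_setXP [A [B [nbhsA nbhsB sub_N]]].
  apply: filterS (nbhs_setX (oadd_cont nbhsA) (discrete_set1 x.2)) => z [Az zx].
  by apply: sub_N; split => //=; rewrite zx; exact: nbhs_singleton nbhsB.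
Qed.

(* Minimality: [Z] is dense in [Z_2] and [F] acts transitively on itself. *)
Lemma twisted_minimal c : minimal_action (twisted c).
Proof.
move=> x; apply/seteqP; split => // z _ N /nbhs_setXP [A [B [nbhsA nbhsB sub_N]]].
have [j cyl_A] := nbhs_cyl nbhsA.
pose n := digits j z.1 - digits j x.1.
pose f := (z.2 * ((x.2 : gT) * cpow c n)^-1)%g.
exists (twisted c (n, f) x); split; first by exists (n, f).
apply: sub_N; split => /=; first exact/cyl_A/oadd_cyl.
by rewrite /f -mulgA mulgKV; exact: nbhs_singleton nbhsB.
Qed.

(* Freeness: [Z] acts freely on [Z_2] and [F] freely on itself. *)
Lemma twisted_free c : free_action (twisted c).
Proof.
case=> n f [y k]; rewrite /twisted /= => -[/oadd_free n0]; rewrite n0 cpow0 mulg1.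
by move/(canRL (mulgK k)); rewrite mulgV => ->.
Qed.

(* All twisted actions have the same orbits: the identity of [Z2xF] is a
   continuous orbit equivalence, with cocycles depending only on [x.2]. *)
Lemma twisted_orbit_equiv c d : cont_orbit_equiv (twisted c) (twisted d).
Proof.
pose cocycle (u v : gT) (g : ZF gT) (x : Z2xF) : ZF gT :=
  (g.1, (g.2 * (x.2 : gT) * cpow u g.1 * (cpow v g.1)^-1 * (x.2 : gT)^-1)%g).
exists id, id, (cocycle c d), (cocycle d c); split; first by split => // x; exact: cvg_id.
split.
- by move=> g x; apply: filterS (nbhs_snd x) => z zx; rewrite /cocycle zx.
- by move=> g x; apply: filterS (nbhs_snd x) => z zx; rewrite /cocycle zx.
- by move=> g x; rewrite /twisted /cocycle /= !mulgKV.
- by move=> g x; rewrite /twisted /cocycle /= !mulgKV.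
Qed.

Lemma twisted_minimal_free c :
  cont_action (twisted c) /\ minimal_action (twisted c) /\ free_action (twisted c).
Proof.
by split; [exact: twisted_action | split; [exact: twisted_minimal | exact: twisted_free]].
Qed.

(* Translation by [2^j] tends to the identity on [Z_2]: for a continuous [phi]
   it eventually does not change the [F]-coordinate of [phi]. *)
Lemma snd_oadd_pow2 (phi : Z2xF -> Z2xF) (x : Z2xF) : continuous phi ->
  exists j, (phi (oadd (pow2 j) x.1, x.2)).2 = (phi x).2.
Proof.
move=> phi_cont; have /nbhs_setXP [A [B [nbhsA nbhsB sub_N]]] :=
  phi_cont x _ (nbhs_snd (phi x)).
have [j cyl_A] := nbhs_cyl nbhsA; exists j.
by apply: sub_N; split; [exact/cyl_A/oadd_pow2 | exact: nbhs_singleton nbhsB].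
Qed.

(* If [F] has trivial center and [c] is not a 2-element, no conjugacy exists:
   it would send [(2^j, 1)] to [(+-2^j, 1)], forcing [c^(2^j) = 1]. *)
Lemma twisted_not_conjugate c : ('Z([set: gT]%SET) = 1)%g -> ~~ (2.-elt c)%g ->
  ~ conjugate_actions (twisted 1) (twisted c).
Proof.
move=> Z1 c_n2 [phi [_ [tau [[phi_cont _ _ _] [tau_aut phi_eq]]]]].
have [e e_unit tauZ] := zf_aut_Z tau_aut Z1.
pose x : Z2xF := (fun _ => false, 1%g).
have [j] := snd_oadd_pow2 x phi_cont.
have -> : (oadd (pow2 j) x.1, x.2) = twisted 1 (pow2 j, 1%g) x.
  by rewrite /twisted cpow1n mul1g mulg1.
rewrite phi_eq tauZ /twisted /= mul1g => /(canRL (mulKg _)); rewrite mulVg.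
move/eqP; rewrite cpow_eq1 dvdzE abszM e_unit muln1 pow2E absz_nat => dvd_c.
by apply: (negP c_n2); rewrite /p_elt (pnat_dvd dvd_c) // pnatX pnat_id.
Qed.
End TwistedActions.

(* A nontrivial finite group with trivial center is not a 2-group (2-groups
   are nilpotent), so by Cauchy it has an element of odd prime order. *)
Lemma exists_non_2elt (gT : finGroupType) :
  ([set: gT]%SET != 1)%g -> ('Z([set: gT]%SET) = 1)%g -> exists c : gT, ~~ (2.-elt c)%g.
Proof.
move=> ntG Z1.
have not2 : ~~ (2.-group [set: gT]%SET)%g.
  by apply: contra ntG => /pgroup_nil/center_nil_eq1 <-; rewrite Z1.
have [p [p_pr p_dvd p_n2]] : exists p, [/\ prime p, p %| #|[set: gT]%SET| & p != 2]%N.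
  apply: contrapT => no_p; apply: (negP not2); apply/pgroupP => p p_pr p_dvd.
  by rewrite inE; apply/negPn/negP => p_n2; apply: no_p; exists p.
have [c _ ord_c] := Cauchy p_pr p_dvd.
by exists c; rewrite /p_elt ord_c pnatE // inE.
Qed.

Local Close Scope ring_scope.
Unset Implicit Arguments.

Theorem theorem1p1 (gT : finGroupType) :
  ([set: gT]%SET != 1)%g -> ('Z([set: gT]%SET) = 1)%g ->
  exists (X : topologicalType) (alpha alpha' : ZF gT -> X -> X),
    [/\ compact [set: X], hausdorff_space X & infinite_set [set: X]] /\
    [/\ cont_action alpha /\ minimal_action alpha /\ free_action alpha,
        cont_action alpha' /\ minimal_action alpha' /\ free_action alpha',
        cont_orbit_equiv alpha alpha'
      & ~ conjugate_actions alpha alpha'].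
Proof.
move=> ntG Z1; have [c c_n2] := exists_non_2elt ntG Z1.
exists (Z2xF gT), (twisted 1), (twisted c); split.
  by split; [exact: Z2xF_compact | exact: Z2xF_hausdorff | exact: Z2xF_infinite].
split; [exact: twisted_minimal_free | exact: twisted_minimal_free | |].
- exact: twisted_orbit_equiv.
- exact: twisted_not_conjugate.
Qed.
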